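(* Let $f\colon[n]^2\to\{0,1\}$ be $2$-column-wise-monotone with $f(1,j)=f(n,j)=0$ for all $j\in[n]$. Then $\mathrm{dist}(f,\mathcal{M}^{(2)}_2)\leq L_1(\overline{f},\mathcal{M}_1)+L_1(\underline{f},\mathcal{M}_1)$. In particular, if $f$ is $\varepsilon$-far from $2$-monotone, then at least one of the two sequences $\underline{f},\overline{f}$ satisfies $L_1(\cdot,\mathcal{M}_1)\geq\varepsilon/2$.
   Context: $[n]^2$ is ordered coordinatewise. $f\colon[n]^2\to\{0,1\}$ is $2$-monotone if there are no $x\preceq y\preceq z$ with $(f(x),f(y),f(z))=(1,0,1)$; $\mathcal{M}^{(2)}_2$ denotes the set of $2$-monotone functions on $[n]^2$ and $\mathrm{dist}(f,\mathcal{M}^{(2)}_2)$ the minimum normalized Hamming distance from $f$ to it. $f$ is $2$-column-wise-monotone if each column map $i\mapsto f(i,j)$ has no $a\leq b\leq c$ with values $1,0,1$. For a column $j$ on which $f$ is not constant, $\underline{f}_j=\min\{i: f(i,j)\neq f(1,j)\}-1$ and $\overline{f}_j=\max\{i: f(i,j)\neq f(n,j)\}+1$; otherwise $\underline{f}_j=\overline{f}_j=1$. These sequences are viewed as functions $[n]\to[n]$. For $a,b\colon[n]\to[n]$, $L_1(a,b)=\frac{1}{n^2}\sum_{j=1}^n|a(j)-b(j)|$, and $L_1(a,\mathcal{M}_1)$ is the minimum of $L_1(a,b)$ over non-increasing $b\colon[n]\to[n]$. *)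

From mathcomp Require Import all_boot all_order all_algebra.
Set Implicit Arguments. Unset Strict Implicit. Unset Printing Implicit Defensive.
Import Order.TTheory GRing.Theory Num.Theory.

(* Conventions: [n] = {1,...,n} is represented by 'I_n, the ordinal k
   standing for k+1.  A function f : [n]^2 -> {0,1} is an element of
   {ffun 'I_n * 'I_n -> bool}; the first coordinate is the row index i,
   the second the column index j (column map: i |-> f(i,j)). *)

Section Defs.
Variable n : nat.
Local Notation pt := ('I_n * 'I_n)%type.
Local Notation fn := {ffun pt -> bool}.

Definition preceq (x y : pt) : bool := (x.1 <= y.1) && (x.2 <= y.2).

Definition two_monotone (g : fn) : bool :=
  [forall x : pt, forall y : pt, forall z : pt,
     (preceq x y && preceq y z) ==> ~~ [&& g x, ~~ g y & g z]].

Definition col_two_monotone (f : fn) : bool :=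
  [forall j : 'I_n, forall a : 'I_n, forall b : 'I_n, forall c : 'I_n,
     ((a <= b) && (b <= c)) ==> ~~ [&& f (a, j), ~~ f (b, j) & f (c, j)]].

(* normalized Hamming distance to the class of 2-monotone functions;
   the default n*n of the iterated minimum is an upper bound of all
   Hamming distances, so this is the genuine minimum *)
Definition hamming (f g : fn) : nat := #|[set x | f x != g x]|.
Definition dist_M2 (f : fn) : rat :=
  (\big[minn/(n * n)%N]_(g : fn | two_monotone g) hamming f g)%:R
  / (n * n)%:R.

(* value of f at the 1-based point (i, j), for 1 <= i, j <= n *)
Definition fv (f : fn) (i j : nat) : bool :=
  if @insub nat (fun k => k < n) 'I_n i.-1 is Some i' then
    if @insub nat (fun k => k < n) 'I_n j.-1 is Some j' then f (i', j')
    else false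
  else false.

Definition col_nonconst (f : fn) (j : nat) : bool :=
  [exists i : 'I_n, fv f i.+1 j != fv f 1 j].

Definition f_under (f : fn) (j : 'I_n) : nat :=
  if col_nonconst f j.+1 then
    (\big[minn/n]_(i < n | fv f i.+1 j.+1 != fv f 1 j.+1) i.+1) - 1
  else 1.

Definition f_over (f : fn) (j : 'I_n) : nat :=
  if col_nonconst f j.+1 then
    (\max_(i < n | fv f i.+1 j.+1 != fv f n j.+1) i.+1) + 1
  else 1.

(* non-increasing b : [n] -> [n] (b j : 'I_n stands for the value (b j)+1) *)
Definition nonincreasing (b : {ffun 'I_n -> 'I_n}) : bool :=
  [forall j1 : 'I_n, forall j2 : 'I_n, (j1 <= j2) ==> (b j2 <= b j1)].

Definition L1sum (a : 'I_n -> nat) (b : {ffun 'I_n -> 'I_n}) : nat :=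
  \sum_(j < n) ((a j - (b j).+1) + ((b j).+1 - a j)).

(* L_1(a, M_1) = min over non-increasing b of (1/n^2) sum_j |a j - b j|;
   the default of the iterated minimum bounds every L1sum a b *)
Definition L1_M1 (a : 'I_n -> nat) : rat :=
  (\big[minn/(\sum_(j < n) (a j + n))%N]_(b : {ffun 'I_n -> 'I_n} | nonincreasing b)
     L1sum a b)%:R / (n * n)%:R.

End Defs.

(* Since f is 2-column-wise monotone and vanishes on the first and last rows,
   each column j is the indicator of the open row interval between
   [f_under f j] and [f_over f j].  For non-increasing sequences lo and hi,
   the band {(i, j) | lo j < i < hi j} is 2-monotone, and as two integer
   intervals differ in at most as many points as their endpoints move, it
   differs from f on column j in at most |f_under j - lo j| + |f_over j - hi j|
   points.  Taking for lo and hi the non-increasing sequences closest to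
   [f_under f] and [f_over f] gives the distance bound. *)

From mathcomp Require Import all_boot all_order all_algebra.
From mathcomp Require Import zify lra.
Import Order.TTheory GRing.Theory Num.Theory.

Set Implicit Arguments.
Unset Strict Implicit.
Unset Printing Implicit Defensive.

Lemma bigminn_le_cond (I : finType) (P : pred I) (F : I -> nat) d i :
  P i -> \big[minn/d]_(j | P j) F j <= F i.
Proof. by move=> Pi; rewrite -minEnat -leEnat bigmin_le_cond. Qed.

Lemma bigminn_le_id (I : finType) (P : pred I) (F : I -> nat) d :
  \big[minn/d]_(j | P j) F j <= d.
Proof. by rewrite -minEnat -leEnat bigmin_le_id. Qed.

Lemma bigminn_attained (I : finType) (P : pred I) (F : I -> nat) d i :
  P i -> (forall j, P j -> F j <= d) ->
  exists2 k, P k & \big[minn/d]_(j | P j) F j = F k.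
Proof.
move=> Pi Fd; rewrite -minEnat (bigmin_eq_arg d i P F Pi) //.
by case: arg_minP => // k Pk _; exists k.
Qed.

Lemma bigmax_attained (I : finType) (P : pred I) (F : I -> nat) i :
  P i -> exists2 k, P k & \max_(j | P j) F j = F k.
Proof.
move=> Pi; rewrite (bigop.bigmax_eq_arg _ Pi).
by case: arg_maxnP => // k Pk _; exists k.
Qed.

Lemma leq_bigminn_add (I J : finType) (P : pred I) (Q : pred J)
    (F : I -> nat) (G : J -> nat) dF dG m :
  m <= dF -> m <= dG -> (forall i j, P i -> Q j -> m <= F i + G j) ->
  m <= \big[minn/dF]_(i | P i) F i + \big[minn/dG]_(j | Q j) G j.
Proof.
move=> m_dF m_dG m_FG.
apply: (big_ind (fun x => m <= x + _)) => [|x y mx my|i Pi].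
- exact: leq_trans m_dF (leq_addr _ _).
- by rewrite addn_minl leq_min mx my.
apply: (big_ind (fun y => m <= F i + y)) => [|x y mx my|j Qj].
- exact: leq_trans m_dG (leq_addl _ _).
- by rewrite addn_minr leq_min mx my.
exact: m_FG.
Qed.

Lemma sum_window_le k m a b :
  \sum_(i < m) (a <= i + k < b) <= minn (m + k) b - a.
Proof.
elim: m => [|m IHm]; first by rewrite big_ord0.
rewrite big_ord_recr /=; move: (\sum_(i < m) _) IHm => S IHm.
by case: (a <= m + k < b) /andP; lia.
Qed.

Lemma interval_symdiff_le a b a' b' i :
  ((a < i.+1 < b) != (a' < i.+1 < b')) <=
  (minn a a' <= i + 0 < maxn a a') + (minn b b' <= i + 1 < maxn b b').
Proof. by rewrite addn0 addn1; case: eqP => //= neq; rewrite addn_gt0 !lt0b; lia. Qed.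

Lemma sum_interval_symdiff_le m a b a' b' :
  \sum_(i < m) ((a < i.+1 < b) != (a' < i.+1 < b'))
    <= (a - a') + (a' - a) + ((b - b') + (b' - b)).
Proof.
apply: leq_trans; first by apply: leq_sum => i _; apply: interval_symdiff_le.
rewrite big_split /=.
apply: leq_add; [apply: leq_trans (sum_window_le 0 _ _ _) _ |
                 apply: leq_trans (sum_window_le 1 _ _ _) _]; lia.
Qed.

Section ConvexPred.
Variables (m : nat) (p : pred 'I_m).
Hypothesis p_convex : forall a b c : 'I_m, a <= b <= c -> p a -> p c -> p b.

Lemma convex_predE i0 r : p i0 ->
  p r = (\big[minn/m]_(i | p i) i.+1 <= r.+1 <= \max_(i | p i) i.+1).
Proof.
move=> p_i0; apply/idP/idP => [pr | ].
  by rewrite bigminn_le_cond //; exact: (leq_bigmax_cond (F := fun i : 'I_m => i.+1) r pr).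
have [a pa ->] := bigminn_attained (F := fun i : 'I_m => i.+1) p_i0 (fun i _ => ltn_ord i).
have [c pc ->] := bigmax_attained (fun i : 'I_m => i.+1) p_i0.
by rewrite !ltnS => ar_rc; apply: p_convex pa pc.
Qed.

End ConvexPred.

Section Grid.
Variable n : nat.
Implicit Types (lo hi b : {ffun 'I_n -> 'I_n}) (f g : {ffun 'I_n * 'I_n -> bool}).

(* Values of [lo] and [hi] are 0-based like the rows, so in 1-based terms
   [band lo hi] is 1 at (i, j) iff [lo j + 1 < i < hi j + 1]. *)
Definition band lo hi : {ffun 'I_n * 'I_n -> bool} :=
  [ffun x : 'I_n * 'I_n => lo x.2 < x.1 < hi x.2].

Lemma nonincreasing_le b (j1 j2 : 'I_n) : nonincreasing b -> j1 <= j2 -> b j2 <= b j1.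
Proof. by move/forallP/(_ j1)/forallP/(_ j2)/implyP. Qed.

Lemma band_two_monotone lo hi :
  nonincreasing lo -> nonincreasing hi -> two_monotone (band lo hi).
Proof.
move=> lo_noninc hi_noninc.
apply/forallP => -[x1 x2]; apply/forallP => -[y1 y2]; apply/forallP => -[z1 z2].
apply/implyP; rewrite /preceq /= => /andP[/andP[x1y1 x2y2] /andP[y1z1 y2z2]].
have := nonincreasing_le lo_noninc x2y2; have := nonincreasing_le hi_noninc y2z2.
rewrite !ffunE /= => hi_zy lo_yx.
by apply/negP => /and3P[/andP[lo_x _] /negP + /andP[_ z_hi]]; apply; apply/andP; lia.
Qed.

Lemma hamming_by_columns f g :
  hamming f g = \sum_(j < n) \sum_(i < n) (f (i, j) != g (i, j)).
Proof.
rewrite /hamming -sum1dep_card big_mkcond exchange_big pair_big /=.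
by apply: eq_bigr => -[i j] _; case: (f _ != g _).
Qed.

End Grid.

Section Columns.
Variables (n : nat) (f : {ffun 'I_n * 'I_n -> bool}).
Hypothesis f_col : col_two_monotone f.
Hypothesis f_ends : forall j : nat, 1 <= j <= n -> fv f 1 j = false /\ fv f n j = false.

Lemma fvE (i j : 'I_n) : fv f i.+1 j.+1 = f (i, j).
Proof.
rewrite /fv /=; case: insubP => [i' _ /val_inj -> | ]; last by rewrite ltn_ord.
by case: insubP => [j' _ /val_inj -> | ]; last by rewrite ltn_ord.
Qed.

Lemma col_nonconstE (j : 'I_n) : col_nonconst f j.+1 = [exists i, f (i, j)].
Proof.
rewrite /col_nonconst (@f_ends j.+1 (ltn_ord j)).1.
by apply: eq_existsb => i; rewrite fvE; case: (f _).
Qed.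

Lemma f_underE (j : 'I_n) : f_under f j =
  if [exists i, f (i, j)] then \big[minn/n]_(i | f (i, j)) i.+1 - 1 else 1.
Proof.
rewrite /f_under col_nonconstE (@f_ends j.+1 (ltn_ord j)).1.
by congr (if _ then _ - 1 else _); apply: eq_bigl => i; rewrite fvE; case: (f _).
Qed.

Lemma f_overE (j : 'I_n) : f_over f j =
  if [exists i, f (i, j)] then \max_(i | f (i, j)) i.+1 + 1 else 1.
Proof.
rewrite /f_over col_nonconstE (@f_ends j.+1 (ltn_ord j)).2.
by congr (if _ then _ + 1 else _); apply: eq_bigl => i; rewrite fvE; case: (f _).
Qed.

Lemma column_convex (j a b c : 'I_n) :
  a <= b <= c -> f (a, j) -> f (c, j) -> f (b, j).
Proof.
move=> abc fa fc; apply: contraT => nfb.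
by move: f_col => /forallP/(_ j)/forallP/(_ a)/forallP/(_ b)/forallP/(_ c)/implyP/(_ abc);
  rewrite fa nfb fc.
Qed.

Lemma columnE (r j : 'I_n) : f (r, j) = (f_under f j < r.+1 < f_over f j).
Proof.
rewrite f_underE f_overE; case: existsP => [[i0 f_i0] | no_one]; last first.
  have /negbTE -> : ~~ f (r, j) by apply/negP => fr; apply: no_one; exists r.
  by rewrite andbF.
rewrite (convex_predE (@column_convex j) r f_i0).
by rewrite addn1 !ltnS leq_subLR add1n.
Qed.

Lemma hamming_band_le lo hi :
  hamming f (band lo hi) <= L1sum (f_over f) hi + L1sum (f_under f) lo.
Proof.
rewrite hamming_by_columns /L1sum -big_split /=; apply: leq_sum => j _.
under eq_bigr do rewrite columnE ffunE /=.
rewrite addnC.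
exact: (sum_interval_symdiff_le n (f_under f j) (f_over f j) (lo j).+1 (hi j).+1).
Qed.

End Columns.

Lemma sqrn_le_sum_addn n (a : 'I_n -> nat) : n * n <= \sum_(j < n) (a j + n).
Proof. by rewrite big_split /= sum_nat_const card_ord leq_addl. Qed.

Local Open Scope ring_scope.

Theorem lemma5p3 (n : nat) (f : {ffun 'I_n * 'I_n -> bool}) :
  col_two_monotone f ->
  (forall j : nat, (1 <= j <= n)%N -> fv f 1 j = false /\ fv f n j = false) ->
  dist_M2 f <= L1_M1 (f_over f) + L1_M1 (f_under f) /\
  (forall eps : rat, eps <= dist_M2 f ->
     eps / 2%:R <= L1_M1 (f_under f) \/ eps / 2%:R <= L1_M1 (f_over f)).
Proof.
move=> f_col f_ends.
have dist_le : dist_M2 f <= L1_M1 (f_over f) + L1_M1 (f_under f).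
  rewrite /dist_M2 /L1_M1 -mulrDl -natrD ler_wpM2r ?invr_ge0 ?ler0n // ler_nat.
  apply: leq_bigminn_add => [||hi lo hi_noninc lo_noninc].
  - exact: leq_trans (bigminn_le_id _ _ _) (sqrn_le_sum_addn _).
  - exact: leq_trans (bigminn_le_id _ _ _) (sqrn_le_sum_addn _).
  apply: leq_trans (bigminn_le_cond _ _ (band_two_monotone lo_noninc hi_noninc)) _.
  exact: hamming_band_le.
split=> // eps eps_le; lra.
Qed.
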